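(* Suppose $G$ is a graph which is not bipartite and which $(\Delta,\beta,d,k)$-expands into $W\subseteq V(G)$, where $\Delta\geq 4$, $k\geq 2$ and $\beta\geq 8\Delta$. Then $G$ contains an odd cycle $C$ of length at most $88\log k\log|G|$ such that $G$ also $(\Delta-3,\beta,d,k)$-expands into $W\setminus V(C)$.
   Context: All logarithms are natural; $|G|$ is the number of vertices. For $S\subseteq V(G)$, $N_G(S)=\{w\in V(G)\setminus S: vw\in E(G)\text{ for some }v\in S\}$. A graph $G$ $(\Delta,\beta,d,k)$-expands into $W\subseteq V(G)$ if (a) $|N_G(S)\cap W|\geq\Delta|S|$ for every $S\subseteq V(G)$ with $|S|\leq\beta d$, and (b) $|N_G(S)|\geq|S|/(10\log k)$ for every $S\subseteq V(G)$ with $\beta d\leq|S|\leq|G|/2$. *)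

From mathcomp Require Import all_boot all_order all_algebra.
From mathcomp Require Import all_classical all_reals all_analysis.
Set Implicit Arguments. Unset Strict Implicit. Unset Printing Implicit Defensive.
Import Order.TTheory GRing.Theory Num.Theory.
Local Open Scope ring_scope.

(* A finite simple graph is given by a vertex type [T : finType] and a
   symmetric irreflexive adjacency relation [e : rel T]; |G| = #|T|. *)

Definition nbhd (T : finType) (e : rel T) (S : {set T}) : {set T} :=
  [set w | (w \notin S) && [exists v in S, e v w]].

Definition bipartite (T : finType) (e : rel T) : Prop :=
  exists A : {set T}, forall x y, e x y -> (x \in A) != (y \in A).

Definition expands_into (R : realType) (T : finType) (e : rel T)
    (Delta beta d k : R) (W : {set T}) : Prop :=
  (forall S : {set T}, ((#|S|%:R : R) <= beta * d) ->
      Delta * #|S|%:R <= #|nbhd e S :&: W|%:R) /\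
  (forall S : {set T}, beta * d <= #|S|%:R -> (#|S|%:R : R) <= #|T|%:R / 2 ->
      #|S|%:R / (10 * ln k) <= #|nbhd e S|%:R).

Definition odd_cycle (T : finType) (e : rel T) (c : seq T) : bool :=
  [&& uniq c, (3 <= size c)%N, odd (size c) & cycle e c].

(* Let C be a shortest odd closed walk; it is an odd cycle.  If a vertex v had
   three neighbours on C and |C| >= 5, two of them would split C into two arcs,
   and closing the odd one through v would give a shorter odd closed walk.  So
   |N(S) ∩ V(C)| <= 3|S|, and removing V(C) from W costs at most 3 in the first
   expansion condition.
   For the length: as Delta >= 1, the two expansion conditions together give
   |N(S)| >= |S| / (10 log k) whenever |S| <= |G|/2, so balls grow by a factor
   1 + 1/(10 log k) per step and every ball of radius m <= (10 log k + 1) log |G| + 1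
   contains more than half of the vertices.  Any two vertices are then joined by a
   walk of length at most 2m; as G is not bipartite, some edge joins two vertices
   whose short walks from a fixed root have the same parity, which closes an odd
   walk of length at most 4m + 1 <= 88 log k log |G|. *)

From mathcomp Require Import all_boot all_order all_algebra.
From mathcomp Require Import all_classical all_reals all_analysis.
From mathcomp Require Import zify ring lra.
Import Order.TTheory GRing.Theory Num.Theory.
Set Implicit Arguments. Unset Strict Implicit. Unset Printing Implicit Defensive.

Lemma leq_card_bigcup (I T : finType) (A : {set I}) (F : I -> {set T}) :
  (#|\bigcup_(i in A) F i| <= \sum_(i in A) #|F i|)%N.
Proof.
elim/big_rec2: _ => [|i n U _ leUn]; first by rewrite cards0.
by rewrite (leq_trans (leq_card_setU _ _).1) ?leq_add2l.
Qed.

Lemma not_uniq_split (T : eqType) (s : seq T) :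
  ~~ uniq s -> exists s1 x s2 s3, s = s1 ++ x :: s2 ++ x :: s3.
Proof.
elim: s => //= a s IHs; rewrite negb_and negbK => /orP[].
  by case/splitPr => s2 s3; exists [::], a, s2, s3.
by move/IHs => [s1 [x [s2 [s3 ->]]]]; exists (a :: s1), x, s2, s3.
Qed.

Lemma not_bipartite_card_ge2 (T : finType) (e : rel T) :
  irreflexive e -> ~ bipartite e -> (2 <= #|T|)%N.
Proof.
move=> e_irr not_bip; have [u [w uw]] : exists u w, e u w.
  apply: contrapT => no_edge; apply: not_bip; exists finset.set0 => u w uw.
  by case: no_edge; exists u, w.
have u_w : u != w by apply: contraTneq uw => ->; rewrite e_irr.
by have := max_card [set u; w]; rewrite cards2 u_w.
Qed.

Section ShortestOddCycle.
Variables (T : finType) (e : rel T).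
Hypothesis e_sym : symmetric e.

(* Minimality is over all closed walks, repeated vertices allowed. *)
Definition shortest_odd_cycle (c : seq T) :=
  [/\ cycle e c, odd (size c) &
      forall c', cycle e c' -> odd (size c') -> (size c <= size c')%N].

Lemma shortest_odd_cycle_rot n c :
  shortest_odd_cycle c -> shortest_odd_cycle (rot n c).
Proof. by case=> cyc odd_c min_c; split; rewrite ?rot_cycle ?size_rot. Qed.

Lemma exists_shortest_odd_cycle c0 : cycle e c0 -> odd (size c0) ->
  exists c, shortest_odd_cycle c /\ (size c <= size c0)%N.
Proof.
move=> cyc0 odd0.
pose has_odd_cycle n := `[< exists c, [/\ cycle e c, odd (size c) & size c = n] >].
have ex_n : exists n, has_odd_cycle n by exists (size c0); apply/asboolP; exists c0.
case: (ex_minnP ex_n) => n /asboolP [c [cyc odd_c <-]] min_n.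
exists c; split; last by apply: min_n; apply/asboolP; exists c0.
by split=> // c' cyc' odd_c'; apply: min_n; apply/asboolP; exists c'.
Qed.

Lemma cycle_split_at x s t :
  cycle e (x :: s ++ x :: t) -> cycle e (x :: s) /\ cycle e (x :: t).
Proof. by rewrite /= rcons_cat cat_path /= !rcons_path => /and3P[-> -> ->]. Qed.

Lemma shortest_odd_cycle_uniq c : shortest_odd_cycle c -> uniq c.
Proof.
case=> cyc odd_c min_c; apply/negPn/negP => /not_uniq_split[c1 [x [c2 [c3 Ec]]]].
have : cycle e (x :: c2 ++ x :: (c3 ++ c1)).
  by move: cyc; rewrite -(rot_cycle (size c1)) Ec rot_size_cat /= -catA.
case/cycle_split_at => /min_c + /min_c; move: odd_c.
by rewrite Ec /= !size_cat /= !size_cat /=; lia.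
Qed.

Lemma shortest_odd_cycle_odd_cycle (e_irr : irreflexive e) c :
  shortest_odd_cycle c -> odd_cycle e c.
Proof.
move=> sc; apply/and4P; split; [exact: shortest_odd_cycle_uniq | | by case: sc..].
by case: sc => + + _; case: c => [|x [|y [|z s]]] //=; rewrite e_irr.
Qed.

(* Closing each of the two arcs of c between x and y through v gives closed
   walks of lengths [size s1 + 3] and [size s2 + 3], one of which is odd. *)
Lemma shortest_odd_cycle_common_nbr c v x y s1 s2 :
  shortest_odd_cycle c -> c = x :: s1 ++ y :: s2 -> e v x -> e v y ->
  size s1 = 1%N \/ size s2 = 1%N.
Proof.
move=> + Ec vx vy; rewrite {}Ec => -[cyc odd_c min_c].
move: cyc; rewrite /= rcons_cat cat_path /= rcons_path => /and4P[p1 l1 p2 l2].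
have /min_c : cycle e (v :: x :: rcons s1 y).
  by rewrite /= vx !rcons_path p1 l1 last_rcons e_sym vy.
have /min_c : cycle e (v :: y :: rcons s2 x).
  by rewrite /= vy !rcons_path p2 l2 last_rcons e_sym vx.
by move: odd_c; rewrite /= !size_rcons /= size_cat /=; lia.
Qed.

Lemma shortest_odd_cycle_no_three_common_nbrs c v x y z s1 t1 t2 :
  shortest_odd_cycle c -> c = x :: s1 ++ y :: t1 ++ z :: t2 ->
  e v x -> e v y -> e v z -> (size c < 5)%N.
Proof.
move=> sc Ec vx vy vz.
have := shortest_odd_cycle_common_nbr sc Ec vx vy.
have : size (s1 ++ y :: t1) = 1%N \/ size t2 = 1%N.
  by apply: (shortest_odd_cycle_common_nbr sc _ vx vz); rewrite Ec -catA.
have : size t1 = 1%N \/ size (t2 ++ x :: s1) = 1%N.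
  apply: (shortest_odd_cycle_common_nbr
           (shortest_odd_cycle_rot (size (x :: s1)) sc) _ vy vz).
  by rewrite Ec -cat_cons rot_size_cat /= -!catA.
by case: sc => _ + _; rewrite Ec /= !size_cat /= !size_cat /=; lia.
Qed.

Lemma card_nbrs_on_shortest_odd_cycle c v :
  shortest_odd_cycle c -> (#|[set w in c | e v w]| <= 3)%N.
Proof.
move=> sc; have [short | long] := ltnP (size c) 5.
  have : (#|[set w in c | e v w]| <= #|c|)%N.
    by apply/subset_leq_card/fintype.subsetP => w; rewrite inE => /andP[].
  by have := card_size c; case: sc => _ + _; lia.
apply: (@leq_trans 2) => //; rewrite leqNgt; apply/negP => /card_gt2P[x [y [z [[]]]]].
rewrite !inE => /andP[xc vx] /andP[yc vy] /andP[zc vz] [nxy nyz nzx].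
move: sc long yc zc; case/splitPr: xc => c1 c2 sc long yc zc.
have {sc long} [sc long] :
    shortest_odd_cycle (x :: c2 ++ c1) /\ (5 <= size (x :: c2 ++ c1))%N.
  split; first by have := shortest_odd_cycle_rot (size c1) sc; rewrite rot_size_cat.
  by move: long; rewrite /= !size_cat /=; lia.
have {yc} yc : y \in c2 ++ c1.
  by move: yc; rewrite !mem_cat in_cons eq_sym (negbTE nxy) orbC.
have {zc} zc : z \in c2 ++ c1.
  by move: zc; rewrite !mem_cat in_cons (negbTE nzx) orbC.
move: sc long zc; case/splitPr: yc => s1 s2 sc long.
rewrite mem_cat in_cons eq_sym (negbTE nyz) /= => /orP[] zc; move: sc long.
  case/splitPr: zc => u1 u2; rewrite -catA => sc.
  by rewrite leqNgt (shortest_odd_cycle_no_three_common_nbrs sc erefl vx vz vy).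
case/splitPr: zc => u1 u2 sc.
by rewrite leqNgt (shortest_odd_cycle_no_three_common_nbrs sc erefl vx vy vz).
Qed.

Lemma card_nbhd_on_shortest_odd_cycle c (S : {set T}) :
  shortest_odd_cycle c -> (#|nbhd e S :&: [set x in c]| <= 3 * #|S|)%N.
Proof.
move=> sc; apply: leq_trans (_ : #|\bigcup_(v in S) [set w in c | e v w]| <= _)%N.
  apply/subset_leq_card/fintype.subsetP => w; rewrite !inE => /andP[/andP[_ /existsP[v]]].
  by case/andP=> vS vw wc; apply/bigcupP; exists v; rewrite ?inE ?wc.
apply: leq_trans (leq_card_bigcup _ _) _; rewrite mulnC -sum_nat_const.
by apply: leq_sum => v _; apply: card_nbrs_on_shortest_odd_cycle.
Qed.

End ShortestOddCycle.

Section Balls.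
Variables (T : finType) (e : rel T).
Hypothesis e_sym : symmetric e.

Definition ball (v : T) (r : nat) : {set T} :=
  iter r (fun B => B :|: nbhd e B) [set v].

Lemma card_ballS v r : #|ball v r.+1| = (#|ball v r| + #|nbhd e (ball v r)|)%N.
Proof.
rewrite /= cardsU (_ : _ :&: _ = finset.set0) ?cards0 ?subn0 //.
by apply/setP => w; rewrite !inE; case: (w \in ball v r).
Qed.

Lemma mem_ball_path v r x : x \in ball v r ->
  exists p, [/\ path e v p, last v p = x & (size p <= r)%N].
Proof.
elim: r x => [|r IHr] x /=; first by rewrite inE => /eqP ->; exists [::].
rewrite !inE => /orP[/IHr[p [pp px pr]] | /andP[_ /existsP[u /andP[uB ux]]]].
  by exists p; split=> //; apply: leqW.
have [p [pp pu pr]] := IHr _ uB.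
by exists (rcons p x); rewrite rcons_path pp pu ux last_rcons size_rcons.
Qed.

Lemma path_rev_exists v p : path e v p ->
  exists q, [/\ path e (last v p) q, last (last v p) q = v & size q = size p].
Proof.
elim: p v => [|y p IHp] v /=; first by exists [::].
case/andP=> vy /IHp[q [qp qv qs]].
by exists (rcons q v); rewrite rcons_path qp qv e_sym vy last_rcons size_rcons qs.
Qed.

Lemma paths_to_adjacent_cycle v p q : path e v p -> path e v q ->
  e (last v p) (last v q) ->
  exists c, cycle e c /\ size c = (size p + size q).+1.
Proof.
move=> pp pq exy; have [p' [pp' p'v p's]] := path_rev_exists pp.
exists (last v p :: p' ++ q); split; last by rewrite /= size_cat p's.
by rewrite /= rcons_cat cat_path pp' p'v rcons_path pq e_sym exy.
Qed.

Lemma large_balls_path m : (forall v, #|T| < 2 * #|ball v m|)%N ->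
  forall v x, exists p, [/\ path e v p, last v p = x & (size p <= 2 * m)%N].
Proof.
move=> large v x.
have /set0Pn[w] : ball v m :&: ball x m != finset.set0.
  apply/negP => /eqP disj; have := cardsU (ball v m) (ball x m).
  by rewrite disj cards0 subn0; have := max_card (ball v m :|: ball x m);
     have := large v; have := large x; lia.
rewrite inE => /andP[/mem_ball_path[p [pp pw ps]] /mem_ball_path[q [qp qw qs]]].
have [q' [qp' q'x q's]] := path_rev_exists qp; rewrite qw in qp' q'x.
exists (p ++ q'); rewrite cat_path pp pw qp' last_cat pw q'x size_cat.
by split=> //; lia.
Qed.

(* Vertices reachable from v0 by a short walk of even length form one side of
   a bipartition unless some edge closes a short odd closed walk. *)
Lemma not_bipartite_short_odd_cycle L : ~ bipartite e ->
  (forall v x, exists p, [/\ path e v p, last v p = x & (size p <= L)%N]) ->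
  exists c, [/\ cycle e c, odd (size c) & (size c <= L.*2.+1)%N].
Proof.
move=> not_bip reach; apply: contrapT => no_short; apply: not_bip.
have [v0 _ | T0] := pickP (@predT T); last by exists finset.set0 => x; have := T0 x.
pose even_reach x := exists p,
  [/\ path e v0 p, last v0 p = x, ~~ odd (size p) & (size p <= L)%N].
have same_parity p q : path e v0 p -> path e v0 q -> e (last v0 p) (last v0 q) ->
    (size p <= L)%N -> (size q <= L)%N -> odd (size p) = odd (size q) -> False.
  move=> pp pq pq_adj pL qL pq_par; apply: no_short.
  have [c [cyc c_size]] := paths_to_adjacent_cycle pp pq pq_adj.
  by exists c; rewrite c_size /= oddD pq_par addbb; split=> //; lia.
exists [set x | `[< even_reach x >]] => x y xy; rewrite !inE.
case: (asboolP (even_reach x)) => [[p [pp px p_ev pL]] | x_odd];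
case: (asboolP (even_reach y)) => [[q [pq qy q_ev qL]] | y_odd] //=.
  by case: (same_parity p q); rewrite ?px ?qy ?(negbTE p_ev) ?(negbTE q_ev).
have odd_len z s : path e v0 s -> last v0 s = z -> (size s <= L)%N ->
    ~ even_reach z -> odd (size s).
  by move=> ps sz sL not_ev; apply/negPn/negP => s_ev; apply: not_ev; exists s.
have [p [pp px pL]] := reach v0 x; have [q [pq qy qL]] := reach v0 y.
by case: (same_parity p q); rewrite ?px ?qy ?(odd_len x p) ?(odd_len y q).
Qed.

End Balls.

Local Open Scope ring_scope.

Lemma subrV_le_ln (R : realType) (z : R) : 0 < z -> 1 - z^-1 <= ln z.
Proof.
move=> z0; have := expR_ge1Dx (ln z^-1).
by rewrite lnK ?posrE ?invr_gt0 // lnV ?posrE //; lra.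
Qed.

Lemma half_le_ln (R : realType) (z : R) : 2 <= z -> 1 / 2 <= ln z.
Proof.
move=> z2; have := subrV_le_ln (ltr0Sn R 1).
have : ln 2 <= ln z :> R by rewrite ler_ln ?posrE ?(lt_le_trans _ z2).
lra.
Qed.

Lemma four_radius_bound (R : realType) (a b : R) (m : nat) :
  1 / 2 <= a -> 1 / 2 <= b -> m%:R <= b / ln (1 + (10 * a)^-1) + 1 ->
  (4 * m + 1)%:R <= 88 * a * b.
Proof.
move=> a_ge b_ge m_le; have a_inv : 0 < (10 * a)^-1 by rewrite invr_gt0; lra.
have l_ge : (10 * a + 1)^-1 <= ln (1 + (10 * a)^-1).
  apply: le_trans (subrV_le_ln _); last by lra.
  suff -> : 1 - (1 + (10 * a)^-1)^-1 = (10 * a + 1)^-1 by [].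
  by field; lra.
have : b / ln (1 + (10 * a)^-1) <= b * (10 * a + 1).
  have l_pos : 0 < ln (1 + (10 * a)^-1).
    by apply: lt_le_trans l_ge; rewrite invr_gt0; lra.
  rewrite ler_pdivrMr // -mulrA; apply: ler_peMr; first lra.
  by rewrite -ler_pdivrMl ?mulr1 //; lra.
by rewrite natrD natrM; nra.
Qed.

Lemma exists_expn_gt (R : realType) (y a : R) : 1 < y -> 1 <= a ->
  exists m : nat, a < y ^+ m /\ m%:R <= ln a / ln y + 1.
Proof.
move=> y1 a1; have lny : 0 < ln y by apply: ln_gt0.
have X0 : 0 <= ln a / ln y by rewrite divr_ge0 ?ln_ge0 // ltW.
exists (Num.truncn (ln a / ln y)).+1; split.
  rewrite -ltr_ln ?posrE ?exprn_gt0 ?(lt_le_trans _ a1) ?(lt_trans _ y1) //.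
  by rewrite lnXn ?(lt_trans _ y1) // -mulr_natl -ltr_pdivrMr // truncnS_gt.
by rewrite -addn1 natrD lerD2r truncn_le.
Qed.

Section Growth.
Variables (R : realType) (T : finType) (e : rel T).

Lemma ball_growth (x : R) : 0 <= x ->
  (forall S : {set T}, (2 * #|S| <= #|T|)%N -> #|S|%:R * x <= #|nbhd e S|%:R) ->
  forall v r, (#|T| < 2 * #|ball e v r|)%N \/ (1 + x) ^+ r <= #|ball e v r|%:R.
Proof.
move=> x0 grow v; elim=> [|r IHr]; first by right; rewrite expr0 cards1.
have sub : (#|ball e v r| <= #|ball e v r.+1|)%N by rewrite card_ballS leq_addr.
case: IHr => [large | IHr]; first by left; lia.
have [large | small] := ltnP #|T| (2 * #|ball e v r|); first by left; lia.
right; rewrite card_ballS natrD exprS; have := grow _ small.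
have := ler_wpM2l (_ : 0 <= 1 + x) IHr; lra.
Qed.

Lemma large_balls (x : R) : 0 < x -> (0 < #|T|)%N ->
  (forall S : {set T}, (2 * #|S| <= #|T|)%N -> #|S|%:R * x <= #|nbhd e S|%:R) ->
  exists m : nat, m%:R <= ln (#|T|%:R : R) / ln (1 + x) + 1 /\
                  forall v, (#|T| < 2 * #|ball e v m|)%N.
Proof.
move=> x0 T0 grow.
have [|//|m [Tm m_le]] := @exists_expn_gt R (1 + x) #|T|%:R; first by lra.
  by rewrite (ler_nat R 1).
exists m; split=> // v; have [//|small] := ball_growth (ltW x0) grow v m.
have : (#|ball e v m| <= #|T|)%N := max_card _.
by rewrite -(ler_nat R) => /(le_trans small) /(lt_le_trans Tm); rewrite ltxx.
Qed.

Variables (Delta beta d k : R) (W : {set T}).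

Lemma expands_into_nbhd_growth : expands_into e Delta beta d k W ->
  (10 * ln k)^-1 <= Delta ->
  forall S : {set T}, (2 * #|S| <= #|T|)%N ->
    #|S|%:R * (10 * ln k)^-1 <= #|nbhd e S|%:R.
Proof.
move=> [small_sets large_sets] Delta_ge S S_half.
have [S_small | S_large] := lerP (#|S|%:R : R) (beta * d); last first.
  by apply: large_sets; [apply: ltW | rewrite ler_pdivlMr // -natrM ler_nat mulnC].
have := small_sets S S_small.
have : (#|nbhd e S :&: W| <= #|nbhd e S|)%N by apply/subset_leq_card/subsetIl.
rewrite -(ler_nat R) => capW.
have := ler_wpM2l (ler0n R #|S|) Delta_ge; lra.
Qed.

Lemma expands_into_setD (t : R) (A : {set T}) :
  (forall S : {set T}, #|nbhd e S :&: A|%:R <= t * #|S|%:R) ->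
  expands_into e Delta beta d k W -> expands_into e (Delta - t) beta d k (W :\: A).
Proof.
move=> sparse [small_sets large_sets]; split=> // S S_small.
have : (#|nbhd e S :&: W| <= #|nbhd e S :&: (W :\: A)| + #|nbhd e S :&: A|)%N.
  apply: leq_trans (leq_card_setU _ _).1; rewrite -finset.setIUr.
  apply/subset_leq_card/finset.setIS/fintype.subsetP => z zW.
  by rewrite finset.in_setU finset.in_setD zW andbT orNb.
rewrite -(ler_nat R) natrD; have := small_sets S S_small; have := sparse S; lra.
Qed.

End Growth.

Theorem lemma4p4 (R : realType) (T : finType) (e : rel T)
    (e_sym : symmetric e) (e_irr : irreflexive e)
    (Delta beta d k : R) (W : {set T}) :
  ~ bipartite e ->
  expands_into e Delta beta d k W ->
  4 <= Delta -> 2 <= k -> 8 * Delta <= beta ->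
  exists c : seq T,
    [/\ odd_cycle e c,
        (size c)%:R <= 88 * ln k * ln (#|T|%:R : R) &
        expands_into e (Delta - 3) beta d k (W :\: [set x in c])].
Proof.
move=> not_bip expW Delta4 k2 _.
have T2 := not_bipartite_card_ge2 e_irr not_bip.
have lnk := half_le_ln k2.
have lnT : 1 / 2 <= ln (#|T|%:R : R) by apply: half_le_ln; rewrite (ler_nat R 2).
have x_pos : 0 < (10 * ln k)^-1 by rewrite invr_gt0; lra.
have x_le_Delta : (10 * ln k)^-1 <= Delta.
  by apply: (@le_trans _ _ 1); [rewrite invf_le1 | ]; lra.
have [m [m_le large]] :=
  large_balls x_pos (ltnW T2) (expands_into_nbhd_growth expW x_le_Delta).
have [c0 [cyc0 odd0 c0_size]] :=
  not_bipartite_short_odd_cycle e_sym not_bip (large_balls_path e_sym large).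
have [c [sc c_size]] := exists_shortest_odd_cycle cyc0 odd0.
exists c; split.
- exact: shortest_odd_cycle_odd_cycle.
- by apply: le_trans (four_radius_bound lnk lnT m_le); rewrite ler_nat; lia.
- apply: expands_into_setD expW => S; rewrite -natrM ler_nat.
  exact: card_nbhd_on_shortest_odd_cycle.
Qed.
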